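(* Consider a firm $i$ in period $t$ whose planned (expected) output is $$Y^e_{it}=F\big(K_{it},\exp\{\varphi_{it}\}L_{it},M_{it}\big)\exp\{\omega_{it}\},$$ and whose realized output is $Y_{it}=Y^e_{it}\exp\{\eta_{it}\}$, where $K_{it}$ is physical capital, $L_{it}$ labor, $M_{it}$ materials, $\omega_{it}$ Hicks-neutral (factor-neutral) productivity, $\varphi_{it}$ Harrod-neutral (labor-augmenting) productivity, and $\eta_{it}$ a transitory shock. Assume: (A1) $K_{it}$ is a dynamic input chosen at time $t-1$ (so it is predetermined at $t$, with $K_{it}=I_{it-1}+(1-\delta)K_{it-1}$), while $L_{it}$ and $M_{it}$ are freely varying inputs chosen statically at time $t$ with no dynamic implications; (A2) $F$ is continuous, differentiable, positively monotone and concave in its inputs, and strongly separable as $F(K,\exp\{\varphi\}L,M)=G\big(K,H(\exp\{\varphi\}L,M)\big)$ with $H$ homogeneous of some degree, and $F$ has a known parametric form; (A3) $\omega_{it}$ and $\varphi_{it}$ follow controlled first-order Markov processes, $\mathcal{P}_\omega(\omega_{it}\mid\Xi_{it-1})=\mathcal{P}_\omega(\omega_{it}\mid\omega_{it-1},X_{it-1})$ and $\mathcal{P}_\varphi(\varphi_{it}\mid\Xi_{it-1})=\mathcal{P}_\varphi(\varphi_{it}\mid\varphi_{it-1},Z_{it-1})$, where $\Xi_{it}$ is the firm's time-$t$ information set and $X_{it},Z_{it}$ are productivity-modifying activities, and $\eta_{it}$ is i.i.d. with $\mathcal{P}_\eta(\eta_{it}\mid\Xi_{it})=\mathcal{P}_\eta(\eta_{it})$;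 (A5) risk-neutral firms face perfectly competitive factor markets with firm-common prices $P^L_t,P^M_t$, and a monopolistically competitive output market with downward-sloping inverse residual demand $P^Y_{it}=D(Y^e_{it},U_{it})$, where $U_{it}\in\Xi_{it}$ is a vector of demand shifters known to the firm. The firm chooses $(L_{it},M_{it})$ to maximize expected static profit $\theta\, D(Y^e_{it},U_{it})\,Y^e_{it}-P^L_tL_{it}-P^M_tM_{it}$ with $\theta=\mathbb{E}[\exp\{\eta_{it}\}\mid\Xi_{it}]$, so that the first-order conditions are $P^Y_{it}\,\theta\,\mu_{it}^{-1}\,\partial Y^e_{it}/\partial M_{it}=P^M_t$ and $P^Y_{it}\,\theta\,\mu_{it}^{-1}\,\partial Y^e_{it}/\partial L_{it}=P^L_t$, where $\mu_{it}=\mu(P^Y_{it},U_{it})=\big(1+1/\delta(P^Y_{it},U_{it})\big)^{-1}$ is the markup and $\delta(P^Y_{it},U_{it})<-1$ is the price elasticity of demand. Suppose in addition that (i) $\partial^2\ln F/(\partial\ln L\,\partial\ln M)\ge 0$, and (ii) $0\le \partial\ln\mu/\partial\ln P^Y\le 1$. Then the firm's conditional material demand $M_{it}=\mathcal{M}(K_{it},P^L_t,P^M_t,U_{it},\varphi_{it},\omega_{it})$ is weakly increasing in $\omega_{it}$ and in $\varphi_{it}$, conditional on $(K_{it},P^L_t,P^M_t,U_{it})$.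
   Context: Firms are indexed by $i$ and time by $t$. $\omega_{it}$ enters output log-additively (Hicks-neutral productivity) and $\varphi_{it}$ multiplies labor inside $F$ (labor-augmenting, Harrod-neutral productivity). The ''conditional material demand'' is the optimal $M_{it}$ solving the static profit maximization above given the state $(K_{it},P^L_t,P^M_t,U_{it},\varphi_{it},\omega_{it})$. *)

From Stdlib Require Import Reals.
From Coquelicot Require Import Coquelicot.
Open Scope R_scope.

(* Positive orthant of input space (K, E, M), E = effective labor exp(phi) L *)
Definition pos3 (K E M : R) : Prop := 0 < K /\ 0 < E /\ 0 < M.

Definition Ye (F : R -> R -> R -> R) (K phi omega L M : R) : R :=
  F K (exp phi * L) M * exp omega.

Definition profit {UT : Type} (F : R -> R -> R -> R) (D : R -> UT -> R)
  (theta K pL pM : R) (u : UT) (phi omega L M : R) : R :=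
  theta * D (Ye F K phi omega L M) u * Ye F K phi omega L M - pL * L - pM * M.

Definition F_continuous (F : R -> R -> R -> R) : Prop :=
  forall K E M, pos3 K E M ->
    filterlim (fun x : R * R * R => F (fst (fst x)) (snd (fst x)) (snd x))
              (locally (K, E, M)) (locally (F K E M)).

Definition F_differentiable (F : R -> R -> R -> R) : Prop :=
  forall K E M, pos3 K E M ->
    ex_filterdiff (fun x : R * R * R => F (fst (fst x)) (snd (fst x)) (snd x)) (locally (K, E, M)).

Definition F_pos_monotone (F : R -> R -> R -> R) : Prop :=
  (forall K E M, pos3 K E M -> 0 < F K E M) /\
  (forall K K' E M, pos3 K E M -> K < K' -> F K E M < F K' E M) /\
  (forall K E E' M, pos3 K E M -> E < E' -> F K E M < F K E' M) /\
  (forall K E M M', pos3 K E M -> M < M' -> F K E M < F K E M').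

Definition F_concave (F : R -> R -> R -> R) : Prop :=
  forall K E M K' E' M' t, pos3 K E M -> pos3 K' E' M' -> 0 <= t <= 1 ->
    t * F K E M + (1 - t) * F K' E' M'
    <= F (t * K + (1 - t) * K') (t * E + (1 - t) * E') (t * M + (1 - t) * M').

Definition homogeneous (H : R -> R -> R) (r : R) : Prop :=
  forall s E M, 0 < s -> 0 < E -> 0 < M -> H (s * E) (s * M) = Rpower s r * H E M.

Definition F_strongly_separable (F : R -> R -> R -> R) : Prop :=
  exists (G : R -> R -> R) (H : R -> R -> R) (r : R),
    homogeneous H r /\ forall K E M, pos3 K E M -> F K E M = G K (H E M).

Definition lnF_loglog (F : R -> R -> R -> R) (K a b : R) : R :=
  ln (F K (exp a) (exp b)).

(* condition (i):  d^2 ln F / (d ln L d ln M) >= 0 *)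
Definition cross_elasticity_nonneg (F : R -> R -> R -> R) : Prop :=
  forall K a b, 0 < K ->
    ex_derive (fun a' => Derive (fun b' => lnF_loglog F K a' b') b) a /\
    0 <= Derive (fun a' => Derive (fun b' => lnF_loglog F K a' b') b) a.

Definition D_downward_sloping {UT : Type} (D : R -> UT -> R) : Prop :=
  forall u, (forall Y, 0 < Y -> 0 < D Y u /\ ex_derive (fun y => D y u) Y) /\
            (forall Y Y', 0 < Y -> Y < Y' -> D Y' u < D Y u).

(* price elasticity of demand at the price P = D(Y,U):
   delta = (dY/dP)(P/Y) = D(Y,U) / (Y * dD/dY) *)
Definition price_elasticity {UT : Type} (D : R -> UT -> R) (u : UT) (Y : R) : R :=
  D Y u / (Y * Derive (fun y => D y u) Y).

Definition markup_of_demand {UT : Type} (D : R -> UT -> R) (mu : R -> UT -> R) : Prop :=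
  forall u Y, 0 < Y ->
    price_elasticity D u Y < -1 /\
    mu (D Y u) u = / (1 + / price_elasticity D u Y).

Definition markup_elasticity_in_01 {UT : Type} (D : R -> UT -> R) (mu : R -> UT -> R) : Prop :=
  forall u Y, 0 < Y ->
    ex_derive (fun x => ln (mu (exp x) u)) (ln (D Y u)) /\
    0 <= Derive (fun x => ln (mu (exp x) u)) (ln (D Y u)) <= 1.

Definition is_conditional_demand {UT : Type} (F : R -> R -> R -> R) (D : R -> UT -> R)
  (theta : R) (Ldem Mdem : R -> R -> R -> UT -> R -> R -> R) : Prop :=
  forall K pL pM u phi omega, 0 < K -> 0 < pL -> 0 < pM ->
    0 < Ldem K pL pM u phi omega /\ 0 < Mdem K pL pM u phi omega /\
    forall L M, 0 < L -> 0 < M ->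
      (L, M) <> (Ldem K pL pM u phi omega, Mdem K pL pM u phi omega) ->
      profit F D theta K pL pM u phi omega L M
      < profit F D theta K pL pM u phi omega
          (Ldem K pL pM u phi omega) (Mdem K pL pM u phi omega).

(* In effective-labor coordinates [E = exp phi * L] expected profit reads
   [R (ln F(K, E, M) + omega) - P^L exp(-phi) E - P^M M], where [R] is revenue
   as a function of log planned output.  Condition (ii) makes [R] increasing
   and convex, and condition (i) makes [ln F] supermodular in [(E, M)]; an
   increasing convex function of an increasing supermodular function is
   supermodular.  Profit moreover has increasing differences in [(E, M)] and
   [omega] (convexity of [R]) and in [(E, M)] and [phi] (the labor cost
   [exp(-phi) E] falls with [phi]).  Topkis' argument then shows that the
   unique maximizer [(E, M)] is nondecreasing in [omega] and in [phi]. *)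

From Stdlib Require Import Reals Lra.
From Coquelicot Require Import Coquelicot.
Open Scope R_scope.

Lemma exp_le_compat (x y : R) : x <= y -> exp x <= exp y.
Proof.
  intros Hxy. destruct (Rle_lt_or_eq_dec _ _ Hxy) as [Hlt | ->].
  - now apply Rlt_le, exp_increasing.
  - apply Rle_refl.
Qed.

Lemma nondecreasing_of_derive_nonneg (f df : R -> R) :
  (forall x, is_derive f x (df x)) -> (forall x, 0 <= df x) ->
  forall x y, x <= y -> f x <= f y.
Proof.
  intros f_derive df_nonneg x y Hxy.
  destruct (MVT_gen f x y df) as [c [_ Hc]].
  - intros z _. apply f_derive.
  - intros z _. apply continuity_pt_filterlim.
    exact (ex_derive_continuous f z (ex_intro _ _ (f_derive z))).
  - assert (0 <= df c * (y - x)) by (apply Rmult_le_pos; [apply df_nonneg | lra]).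
    lra.
Qed.

Section IncreasingConvex.

Variables f df : R -> R.
Hypothesis f_derive : forall x, is_derive f x (df x).
Hypothesis df_nonneg : forall x, 0 <= df x.
Hypothesis df_nondecreasing : forall x y, x <= y -> df x <= df y.

Lemma increment_nondecreasing x y d' d :
  x <= y -> 0 <= d' <= d -> f (x + d') - f x <= f (y + d) - f y.
Proof.
  intros Hxy Hd.
  assert (Hshift : f (x + d') - f x <= f (y + d') - f y).
  { apply (nondecreasing_of_derive_nonneg
             (fun s => f (s + d') - f s) (fun s => df (s + d') - df s)); auto.
    - intro s. apply (is_derive_minus (fun s => f (s + d')) f); [| apply f_derive].
      rewrite <- (scal_one (df (s + d'))).
      apply (is_derive_comp f (fun s => s + d')); [apply f_derive |].
      auto_derive; [trivial | reflexivity].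
    - intro s. assert (df s <= df (s + d')) by (apply df_nondecreasing; lra).
      lra. }
  assert (f (y + d') <= f (y + d)) by (apply (nondecreasing_of_derive_nonneg f df); auto; lra).
  lra.
Qed.

Lemma increasing_convex_supermodular A B C Dd :
  A <= B -> A <= C -> B <= Dd -> C <= Dd -> B - A <= Dd - C ->
  f B + f C <= f Dd + f A.
Proof.
  intros HAB HAC HBD HCD Hgap.
  destruct (Rle_or_lt B C) as [HBC | HCB].
  - pose proof (increment_nondecreasing A C (B - A) (Dd - C) HAC ltac:(lra)) as H.
    replace (A + (B - A)) with B in H by ring.
    replace (C + (Dd - C)) with Dd in H by ring. lra.
  - pose proof (increment_nondecreasing A B (C - A) (Dd - B) HAB ltac:(lra)) as H.
    replace (A + (C - A)) with C in H by ring.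
    replace (B + (Dd - B)) with Dd in H by ring. lra.
Qed.

End IncreasingConvex.

Lemma supermodular_of_cross_derive_nonneg (g : R -> R -> R) a1 a2 b1 b2 :
  (forall a b, ex_derive (fun b' => g a b') b) ->
  (forall a b, ex_derive (fun a' => Derive (fun b' => g a' b') b) a /\
               0 <= Derive (fun a' => Derive (fun b' => g a' b') b) a) ->
  a1 <= a2 -> b1 <= b2 -> g a2 b1 + g a1 b2 <= g a2 b2 + g a1 b1.
Proof.
  intros Hg Hcross Ha Hb.
  assert (Hslope : forall b, Derive (fun b' => g a1 b') b <= Derive (fun b' => g a2 b') b).
  { intro b.
    apply (nondecreasing_of_derive_nonneg (fun a => Derive (fun b' => g a b') b)
             (fun a => Derive (fun a' => Derive (fun b' => g a' b') b) a)); auto.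
    - intro a. apply Derive_correct, Hcross.
    - intro a. apply Hcross. }
  assert (g a2 b1 - g a1 b1 <= g a2 b2 - g a1 b2); [| lra].
  apply (nondecreasing_of_derive_nonneg (fun b => g a2 b - g a1 b)
           (fun b => Derive (fun b' => g a2 b') b - Derive (fun b' => g a1 b') b)); auto.
  - intro b. apply (is_derive_minus (fun b => g a2 b) (fun b => g a1 b));
      apply Derive_correct, Hg.
  - intro b. specialize (Hslope b). lra.
Qed.

Definition is_strict_argmax (P : R -> R -> R) (a b : R) : Prop :=
  0 < a /\ 0 < b /\
  forall x y, 0 < x -> 0 < y -> (x, y) <> (a, b) -> P x y < P a b.

Definition supermodular_on_orthant (P : R -> R -> R) : Prop :=
  forall a1 a2 b1 b2, 0 < a1 -> a1 <= a2 -> 0 < b1 -> b1 <= b2 ->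
    P a2 b1 + P a1 b2 <= P a2 b2 + P a1 b1.

Definition increasing_differences_on_orthant (P1 P2 : R -> R -> R) : Prop :=
  forall a a' b b', 0 < a -> a <= a' -> 0 < b -> b <= b' ->
    P1 a' b' - P1 a b <= P2 a' b' - P2 a b.

Lemma supermodular_join_meet (P : R -> R -> R) a1 b1 a2 b2 :
  supermodular_on_orthant P -> 0 < a1 -> 0 < b1 -> 0 < a2 -> 0 < b2 ->
  P a1 b1 + P a2 b2 <= P (Rmax a1 a2) (Rmax b1 b2) + P (Rmin a1 a2) (Rmin b1 b2).
Proof.
  intros Hsm Ha1 Hb1 Ha2 Hb2.
  destruct (Rle_or_lt a1 a2) as [Ha | Ha]; destruct (Rle_or_lt b1 b2) as [Hb | Hb].
  - rewrite Rmax_right, (Rmax_right b1), Rmin_left, (Rmin_left b1) by lra. lra.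
  - rewrite Rmax_right, (Rmax_left b1), Rmin_left, (Rmin_right b1) by lra.
    pose proof (Hsm a1 a2 b2 b1 Ha1 Ha Hb2 ltac:(lra)). lra.
  - rewrite Rmax_left, (Rmax_right b1), Rmin_right, (Rmin_left b1) by lra.
    pose proof (Hsm a2 a1 b1 b2 Ha2 ltac:(lra) Hb1 Hb). lra.
  - rewrite Rmax_left, (Rmax_left b1), Rmin_right, (Rmin_right b1) by lra. lra.
Qed.

Lemma strict_argmax_max (P : R -> R -> R) a b x y :
  is_strict_argmax P a b -> 0 < x -> 0 < y -> P x y <= P a b.
Proof.
  intros [_ [_ Hopt]] Hx Hy.
  destruct (Req_dec x a) as [-> | Hxa]; [destruct (Req_dec y b) as [-> | Hyb] |].
  - apply Rle_refl.
  - apply Rlt_le, Hopt; auto. now intros [=].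
  - apply Rlt_le, Hopt; auto. now intros [=].
Qed.

Lemma strict_argmax_unique (P : R -> R -> R) a b x y :
  is_strict_argmax P a b -> 0 < x -> 0 < y -> P a b <= P x y -> x = a /\ y = b.
Proof.
  intros [_ [_ Hopt]] Hx Hy Hle.
  destruct (Req_dec x a) as [-> | Hxa]; [destruct (Req_dec y b) as [-> | Hyb] |].
  - now split.
  - assert (P a y < P a b) by (apply Hopt; auto; now intros [=]). lra.
  - assert (P x y < P a b) by (apply Hopt; auto; now intros [=]). lra.
Qed.

(* Topkis: the meet does no better than [(a1, b1)] under [P1], so by increasing
   differences and supermodularity the join does at least as well as [(a2, b2)]
   under [P2], and uniqueness makes the join equal to [(a2, b2)]. *)
Lemma strict_argmax_monotone (P1 P2 : R -> R -> R) a1 b1 a2 b2 :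
  is_strict_argmax P1 a1 b1 -> is_strict_argmax P2 a2 b2 ->
  supermodular_on_orthant P2 -> increasing_differences_on_orthant P1 P2 ->
  a1 <= a2 /\ b1 <= b2.
Proof.
  intros Hmax1 Hmax2 Hsm Hid.
  pose proof Hmax1 as [Ha1 [Hb1 _]]. pose proof Hmax2 as [Ha2 [Hb2 _]].
  assert (Hmin_a : 0 < Rmin a1 a2) by (apply Rmin_glb_lt; lra).
  assert (Hmin_b : 0 < Rmin b1 b2) by (apply Rmin_glb_lt; lra).
  assert (Hmax_a : 0 < Rmax a1 a2) by (eapply Rlt_le_trans; [exact Ha1 | apply Rmax_l]).
  assert (Hmax_b : 0 < Rmax b1 b2) by (eapply Rlt_le_trans; [exact Hb1 | apply Rmax_l]).
  pose proof (strict_argmax_max P1 a1 b1 _ _ Hmax1 Hmin_a Hmin_b).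
  pose proof (Hid _ _ _ _ Hmin_a (Rmin_l a1 a2) Hmin_b (Rmin_l b1 b2)).
  pose proof (supermodular_join_meet P2 a1 b1 a2 b2 Hsm Ha1 Hb1 Ha2 Hb2).
  destruct (strict_argmax_unique P2 a2 b2 _ _ Hmax2 Hmax_a Hmax_b) as [Ea Eb]; [lra |].
  rewrite <- Ea, <- Eb. split; apply Rmax_l.
Qed.

Definition revenue {UT : Type} (D : R -> UT -> R) (u : UT) (theta y : R) : R :=
  theta * D (exp y) u * exp y.

Definition marginal_revenue {UT : Type} (D : R -> UT -> R) (mu : R -> UT -> R)
  (u : UT) (theta y : R) : R :=
  revenue D u theta y / mu (D (exp y) u) u.

Section Demand.

Context {UT : Type} (D : R -> UT -> R) (mu : R -> UT -> R) (u : UT).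
Hypothesis D_downward : D_downward_sloping D.
Hypothesis D_markup : markup_of_demand D mu.

Lemma demand_pos Y : 0 < Y -> 0 < D Y u.
Proof. intro HY. now apply (proj1 (D_downward u)). Qed.

Lemma inv_price_elasticity_eq Y :
  0 < Y -> / price_elasticity D u Y = Y * Derive (fun y => D y u) Y / D Y u.
Proof.
  intro HY. pose proof (demand_pos Y HY) as HD.
  destruct (D_markup u Y HY) as [Hel _]. unfold price_elasticity in *.
  destruct (Req_dec (Derive (fun y => D y u) Y) 0) as [H0 | Hne].
  - rewrite H0, Rmult_0_r, Rdiv_0_r in Hel. lra.
  - field. repeat split; auto; lra.
Qed.

Lemma inv_price_elasticity_bounds Y : 0 < Y -> -1 < / price_elasticity D u Y < 0.
Proof.
  intro HY. destruct (D_markup u Y HY) as [Hel _].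
  assert (price_elasticity D u Y * / price_elasticity D u Y = 1) by (field; lra).
  assert (/ price_elasticity D u Y < 0) by (apply Rinv_lt_0_compat; lra).
  split; nra.
Qed.

Lemma markup_pos Y : 0 < Y -> 0 < mu (D Y u) u.
Proof.
  intro HY. destruct (D_markup u Y HY) as [_ ->].
  pose proof (inv_price_elasticity_bounds Y HY).
  apply Rinv_0_lt_compat. lra.
Qed.

Lemma price_derive y :
  is_derive (fun y => D (exp y) u) y (D (exp y) u * / price_elasticity D u (exp y)).
Proof.
  pose proof (exp_pos y) as Hy. pose proof (demand_pos _ Hy).
  rewrite inv_price_elasticity_eq by exact Hy.
  replace (D (exp y) u * (exp y * Derive (fun Y => D Y u) (exp y) / D (exp y) u))
    with (scal (exp y) (Derive (fun Y => D Y u) (exp y)))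
    by (unfold scal; simpl; unfold mult; simpl; field; lra).
  apply (is_derive_comp (fun Y => D Y u) exp).
  - apply Derive_correct. now apply (proj1 (D_downward u)).
  - apply is_derive_exp.
Qed.

Variable theta : R.
Hypothesis theta_pos : 0 < theta.

Lemma revenue_derive y :
  is_derive (revenue D u theta) y (marginal_revenue D mu u theta y).
Proof.
  pose proof (exp_pos y) as Hy.
  destruct (D_markup u (exp y) Hy) as [Hel Hmu].
  replace (marginal_revenue D mu u theta y) with
    (theta * (D (exp y) u * / price_elasticity D u (exp y)) * exp y
     + theta * D (exp y) u * exp y).
  - apply (is_derive_mult (fun y => theta * D (exp y) u) exp).
    + apply (is_derive_scal (fun y => D (exp y) u)), price_derive.
    + apply is_derive_exp.
    + apply Rmult_comm.
  - unfold marginal_revenue, revenue.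
    rewrite Hmu. field. split; lra.
Qed.

Lemma marginal_revenue_pos y : 0 < marginal_revenue D mu u theta y.
Proof.
  pose proof (exp_pos y) as Hy.
  unfold marginal_revenue, revenue.
  apply Rdiv_lt_0_compat; [| now apply markup_pos].
  apply Rmult_lt_0_compat; [apply Rmult_lt_0_compat |]; auto using demand_pos.
Qed.

Lemma log_price_derive y :
  is_derive (fun y => ln (D (exp y) u)) y (/ price_elasticity D u (exp y)).
Proof.
  pose proof (demand_pos _ (exp_pos y)) as HD.
  pose proof (proj1 (D_markup u (exp y) (exp_pos y))) as Hel.
  replace (/ price_elasticity D u (exp y))
    with (scal (D (exp y) u * / price_elasticity D u (exp y)) (/ D (exp y) u))
    by (unfold scal; simpl; unfold mult; simpl; field; split; lra).
  apply (is_derive_comp ln (fun y => D (exp y) u)).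
  - now apply is_derive_ln.
  - apply price_derive.
Qed.

Hypothesis markup_elastic : markup_elasticity_in_01 D mu.

(* [ln MR = ln theta + ln P + y - ln mu(P)] with [d ln P / dy = 1/delta] in
   [(-1, 0)], so [d ln MR / dy = 1 + (1 - d ln mu / d ln P) / delta >= 0]. *)
Lemma marginal_revenue_nondecreasing x y :
  x <= y -> marginal_revenue D mu u theta x <= marginal_revenue D mu u theta y.
Proof.
  intros Hxy.
  set (log_price := fun y => ln (D (exp y) u)).
  set (log_markup := fun p => ln (mu (exp p) u)).
  set (h := fun y => log_price y + y - log_markup (log_price y)).
  assert (Hexp : forall y, marginal_revenue D mu u theta y = theta * exp (h y)).
  { intro z. pose proof (exp_pos z) as Hz. pose proof (markup_pos _ Hz).
    pose proof (demand_pos _ Hz).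
    unfold h, log_markup, log_price, marginal_revenue, revenue, Rminus.
    rewrite exp_ln by lra. rewrite !exp_plus, exp_Ropp, !exp_ln by lra.
    field. lra. }
  rewrite !Hexp. apply Rmult_le_compat_l; [lra |]. apply exp_le_compat.
  apply (nondecreasing_of_derive_nonneg h
           (fun y => / price_elasticity D u (exp y) * (1 - Derive log_markup (log_price y)) + 1));
    [| | exact Hxy].
  - intro z. destruct (markup_elastic u (exp z) (exp_pos z)) as [Hex _].
    replace (/ price_elasticity D u (exp z) * (1 - Derive log_markup (log_price z)) + 1)
      with (/ price_elasticity D u (exp z) + 1
            - scal (/ price_elasticity D u (exp z)) (Derive log_markup (log_price z)))
      by (unfold scal; simpl; unfold mult; simpl; ring).
    apply (is_derive_minus (fun y => log_price y + y) (fun y => log_markup (log_price y))).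
    + apply (is_derive_plus log_price (fun y => y)).
      * apply log_price_derive.
      * exact (is_derive_id z).
    + apply (is_derive_comp log_markup log_price).
      * now apply Derive_correct.
      * apply log_price_derive.
  - intro z. pose proof (inv_price_elasticity_bounds _ (exp_pos z)).
    destruct (markup_elastic u (exp z) (exp_pos z)) as [_ Hslope].
    unfold log_markup, log_price. nra.
Qed.

Lemma revenue_increment_nondecreasing x y d' d :
  x <= y -> 0 <= d' <= d ->
  revenue D u theta (x + d') - revenue D u theta x
  <= revenue D u theta (y + d) - revenue D u theta y.
Proof.
  apply (increment_nondecreasing _ _ revenue_derive).
  - intro z. apply Rlt_le, marginal_revenue_pos.
  - exact marginal_revenue_nondecreasing.
Qed.

Lemma revenue_supermodular A B C Dd :
  A <= B -> A <= C -> B <= Dd -> C <= Dd -> B - A <= Dd - C ->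
  revenue D u theta B + revenue D u theta C <= revenue D u theta Dd + revenue D u theta A.
Proof.
  apply (increasing_convex_supermodular _ _ revenue_derive).
  - intro z. apply Rlt_le, marginal_revenue_pos.
  - exact marginal_revenue_nondecreasing.
Qed.

End Demand.

Lemma F_ex_derive_M (F : R -> R -> R -> R) K E M :
  F_differentiable F -> pos3 K E M -> ex_derive (fun m => F K E m) M.
Proof.
  intros HF Hp. apply ex_derive_filterdiff.
  destruct (HF K E M Hp) as [l Hl].
  eexists.
  apply (filterdiff_comp'_2 (fun _ : R => (K, E)) (fun m : R => m)
           (fun (p : R * R) (m : R) => F (fst p) (snd p) m) M
           (fun _ => zero) (fun y => y) (fun p m => l (p, m))).
  - apply filterdiff_const.
  - apply filterdiff_id.
  - eapply filterdiff_ext_lin; [exact Hl |]. now intros [p m].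
Qed.

Section Production.

Variables (F : R -> R -> R -> R) (K : R).
Hypothesis F_diff : F_differentiable F.
Hypothesis F_mono : F_pos_monotone F.
Hypothesis K_pos : 0 < K.

Lemma ln_F_le E1 E2 M1 M2 :
  0 < E1 -> E1 <= E2 -> 0 < M1 -> M1 <= M2 -> ln (F K E1 M1) <= ln (F K E2 M2).
Proof.
  destruct F_mono as [F_pos [_ [F_incr_E F_incr_M]]].
  intros HE1 HE HM1 HM.
  assert (F K E1 M1 <= F K E2 M1).
  { destruct (Rle_lt_or_eq_dec _ _ HE) as [Hlt | ->]; [| lra].
    apply Rlt_le, F_incr_E; [repeat split |]; lra. }
  assert (F K E2 M1 <= F K E2 M2).
  { destruct (Rle_lt_or_eq_dec _ _ HM) as [Hlt | ->]; [| lra].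
    apply Rlt_le, F_incr_M; [repeat split |]; lra. }
  apply ln_le; [apply F_pos; repeat split |]; lra.
Qed.

Hypothesis F_cross : cross_elasticity_nonneg F.

Lemma ln_F_supermodular E1 E2 M1 M2 :
  0 < E1 -> E1 <= E2 -> 0 < M1 -> M1 <= M2 ->
  ln (F K E2 M1) + ln (F K E1 M2) <= ln (F K E2 M2) + ln (F K E1 M1).
Proof.
  intros HE1 HE HM1 HM.
  assert (Hloglog : forall E M, 0 < E -> 0 < M ->
            ln (F K E M) = lnF_loglog F K (ln E) (ln M)).
  { intros E M HE' HM'. unfold lnF_loglog. now rewrite !exp_ln. }
  rewrite !Hloglog by lra.
  apply supermodular_of_cross_derive_nonneg; [| now intros; apply F_cross | |];
    [| apply ln_le; lra ..].
  intros a b. unfold lnF_loglog.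
  assert (Hp : pos3 K (exp a) (exp b)) by (repeat split; auto using exp_pos).
  apply (ex_derive_comp ln (fun b' => F K (exp a) (exp b'))).
  - eexists. now apply is_derive_ln, F_mono.
  - apply (ex_derive_comp (fun m => F K (exp a) m) exp).
    + now apply F_ex_derive_M.
    + eexists. apply is_derive_exp.
Qed.

End Production.

Definition effective_profit {UT : Type} (F : R -> R -> R -> R) (D : R -> UT -> R)
  (theta K pL pM : R) (u : UT) (phi omega E M : R) : R :=
  revenue D u theta (ln (F K E M) + omega) - pL / exp phi * E - pM * M.

Section Profit.

Context {UT : Type} (F : R -> R -> R -> R) (D : R -> UT -> R) (mu : R -> UT -> R).
Variables (theta K pL pM : R) (u : UT).
Hypothesis F_mono : F_pos_monotone F.
Hypothesis K_pos : 0 < K.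

Lemma profit_effective phi omega L M :
  0 < L -> 0 < M ->
  profit F D theta K pL pM u phi omega L M
  = effective_profit F D theta K pL pM u phi omega (exp phi * L) M.
Proof.
  intros HL HM. pose proof (exp_pos phi).
  assert (0 < F K (exp phi * L) M)
    by (apply F_mono; repeat split; auto; apply Rmult_lt_0_compat; auto).
  unfold profit, effective_profit, revenue, Ye.
  rewrite exp_plus, exp_ln by lra. field. lra.
Qed.

Lemma conditional_demand_strict_argmax Ldem Mdem phi omega :
  is_conditional_demand F D theta Ldem Mdem -> 0 < pL -> 0 < pM ->
  is_strict_argmax (effective_profit F D theta K pL pM u phi omega)
    (exp phi * Ldem K pL pM u phi omega) (Mdem K pL pM u phi omega).
Proof.
  intros Hdem HpL HpM.
  destruct (Hdem K pL pM u phi omega K_pos HpL HpM) as [HL [HM Hopt]].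
  pose proof (exp_pos phi).
  split; [now apply Rmult_lt_0_compat |]. split; [exact HM |].
  intros E M' HE HM' Hne.
  assert (HEeq : E = exp phi * (E / exp phi)) by (field; lra).
  assert (0 < E / exp phi) by (apply Rdiv_lt_0_compat; auto).
  rewrite HEeq, <- !profit_effective by auto.
  apply Hopt; auto.
  intros [= HEL HMM]. apply Hne. now rewrite HEeq, HEL, HMM.
Qed.

Hypothesis D_downward : D_downward_sloping D.
Hypothesis D_markup : markup_of_demand D mu.
Hypothesis markup_elastic : markup_elasticity_in_01 D mu.
Hypothesis theta_pos : 0 < theta.
Hypothesis F_diff : F_differentiable F.
Hypothesis F_cross : cross_elasticity_nonneg F.

Lemma effective_profit_supermodular phi omega :
  supermodular_on_orthant (effective_profit F D theta K pL pM u phi omega).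
Proof.
  intros E1 E2 M1 M2 HE1 HE HM1 HM.
  pose proof (ln_F_supermodular F K F_diff F_mono K_pos F_cross E1 E2 M1 M2 HE1 HE HM1 HM).
  pose proof (ln_F_le F K F_mono K_pos E1 E2 M1 M1 HE1 HE HM1 (Rle_refl _)).
  pose proof (ln_F_le F K F_mono K_pos E1 E1 M1 M2 HE1 (Rle_refl _) HM1 HM).
  pose proof (ln_F_le F K F_mono K_pos E2 E2 M1 M2 ltac:(lra) (Rle_refl _) HM1 HM).
  pose proof (ln_F_le F K F_mono K_pos E1 E2 M2 M2 HE1 HE ltac:(lra) (Rle_refl _)).
  unfold effective_profit.
  enough (revenue D u theta (ln (F K E2 M1) + omega) + revenue D u theta (ln (F K E1 M2) + omega)
          <= revenue D u theta (ln (F K E2 M2) + omega)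
             + revenue D u theta (ln (F K E1 M1) + omega)) by lra.
  apply (revenue_supermodular D mu u D_downward D_markup theta theta_pos markup_elastic); lra.
Qed.

Lemma effective_profit_increasing_differences_omega phi omega1 omega2 :
  omega1 <= omega2 ->
  increasing_differences_on_orthant
    (effective_profit F D theta K pL pM u phi omega1)
    (effective_profit F D theta K pL pM u phi omega2).
Proof.
  intros Homega E E' M M' HE HEE' HM HMM'.
  pose proof (ln_F_le F K F_mono K_pos E E' M M' HE HEE' HM HMM').
  unfold effective_profit.
  set (g := ln (F K E M)) in *. set (g' := ln (F K E' M')) in *.
  enough (revenue D u theta (g' + omega1) - revenue D u theta (g + omega1)
          <= revenue D u theta (g' + omega2) - revenue D u theta (g + omega2)) by lra.
  replace (g' + omega1) with (g + omega1 + (g' - g)) by ring.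
  replace (g' + omega2) with (g + omega2 + (g' - g)) by ring.
  apply (revenue_increment_nondecreasing D mu u D_downward D_markup theta theta_pos
           markup_elastic); lra.
Qed.

End Profit.

Lemma effective_profit_increasing_differences_phi {UT : Type} F (D : R -> UT -> R)
  theta K pL pM u omega phi1 phi2 :
  0 < pL -> phi1 <= phi2 ->
  increasing_differences_on_orthant
    (effective_profit F D theta K pL pM u phi1 omega)
    (effective_profit F D theta K pL pM u phi2 omega).
Proof.
  intros HpL Hphi E E' M M' HE HEE' HM HMM'.
  unfold effective_profit.
  assert (/ exp phi2 <= / exp phi1)
    by (apply Rinv_le_contravar; [apply exp_pos | now apply exp_le_compat]).
  assert (pL / exp phi2 * (E' - E) <= pL / exp phi1 * (E' - E))
    by (apply Rmult_le_compat_r; [lra | apply Rmult_le_compat_l; lra]).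
  lra.
Qed.

Theorem proposition1 (UT : Type) (F : R -> R -> R -> R) (D : R -> UT -> R)
  (mu : R -> UT -> R) (theta : R) (Ldem Mdem : R -> R -> R -> UT -> R -> R -> R) :
  (* (A2) *)
  F_continuous F -> F_differentiable F -> F_pos_monotone F -> F_concave F ->
  F_strongly_separable F ->
  (* (A5) *)
  D_downward_sloping D -> markup_of_demand D mu ->
  (* theta = E[exp eta | Xi] > 0, a constant by (A3) *)
  0 < theta ->
  (* material (and labor) demand solve the static profit maximization *)
  is_conditional_demand F D theta Ldem Mdem ->
  (* (i) and (ii) *)
  cross_elasticity_nonneg F -> markup_elasticity_in_01 D mu ->
  forall K pL pM (u : UT), 0 < K -> 0 < pL -> 0 < pM ->
    (forall phi omega1 omega2, omega1 <= omega2 ->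
       Mdem K pL pM u phi omega1 <= Mdem K pL pM u phi omega2) /\
    (forall omega phi1 phi2, phi1 <= phi2 ->
       Mdem K pL pM u phi1 omega <= Mdem K pL pM u phi2 omega).
Proof.
  intros _ F_diff F_mono _ _ D_downward D_markup theta_pos Hdem F_cross markup_elastic
    K pL pM u K_pos pL_pos pM_pos.
  pose proof (fun phi omega => conditional_demand_strict_argmax F D theta K pL pM u
                F_mono K_pos Ldem Mdem phi omega Hdem pL_pos pM_pos) as Hargmax.
  pose proof (fun phi omega => effective_profit_supermodular F D mu theta K pL pM u
                F_mono K_pos D_downward D_markup markup_elastic theta_pos F_diff F_cross
                phi omega) as Hsupermodular.
  split.
  - intros phi omega1 omega2 Homega.
    apply (strict_argmax_monotone _ _ _ _ _ _ (Hargmax phi omega1) (Hargmax phi omega2)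
             (Hsupermodular phi omega2)).
    now apply (effective_profit_increasing_differences_omega F D mu).
  - intros omega phi1 phi2 Hphi.
    apply (strict_argmax_monotone _ _ _ _ _ _ (Hargmax phi1 omega) (Hargmax phi2 omega)
             (Hsupermodular phi2 omega)).
    now apply effective_profit_increasing_differences_phi.
Qed.
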